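(* Let $T$ be a $\delta$-Jordan Lie supertriple system and $N:T\to T$ a Nijenhuis operator for $T$. Define $$\psi(x_1,x_2,x_3)=(-1)^{|x_1|(|x_2|+|x_3|)}\theta(x_2,x_3)Nx_1-\delta(-1)^{|x_2||x_3|}\theta(x_1,x_3)Nx_2+\delta D(x_1,x_2)Nx_3-N[x_1,x_2,x_3].$$ Then $[x_1,x_2,x_3]_\lambda=[x_1,x_2,x_3]+\lambda\psi(x_1,x_2,x_3)$ ($\lambda$ a formal variable) defines a deformation of $T$, i.e. $T$ with $[\cdot,\cdot,\cdot]_\lambda$ is a $\delta$-Jordan Lie supertriple system, and this deformation is trivial.
   Context: A $\delta$-Jordan Lie supertriple system ($\delta\in\{1,-1\}$) is a $\mathbb{Z}_2$-graded vector space $T$ with a trilinear product $[\cdot,\cdot,\cdot]$ such that, for all homogeneous $a,b,c,d,e$ (with $|a|$ the degree of $a$): $|[a,b,c]|=|a|+|b|+|c|$; $[b,a,c]=-\delta(-1)^{|a||b|}[a,b,c]$; $(-1)^{|a||c|}[a,b,c]+(-1)^{|b||a|}[b,c,a]+(-1)^{|c||b|}[c,a,b]=0$; and $[a,b,[c,d,e]]=[[a,b,c],d,e]+(-1)^{|c|(|a|+|b|)}[c,[a,b,d],e]+\delta(-1)^{(|a|+|b|)(|c|+|d|)}[c,d,[a,b,e]]$. Here $\theta(a,b)(x)=(-1)^{|x|(|a|+|b|)}[x,a,b]$ and $D(a,b)(x)=\delta[a,b,x]$ (the adjoint representation). A linear operator $N:T\to T$ is a Nijenhuis operator if for all $x_1,x_2,x_3\in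 T$: $[Nx_1,Nx_2,Nx_3]=0$ and $N^2[x_1,x_2,x_3]=N[Nx_1,x_2,x_3]+N[x_1,Nx_2,x_3]+N[x_1,x_2,Nx_3]-[Nx_1,Nx_2,x_3]-[x_1,Nx_2,Nx_3]-[Nx_1,x_2,Nx_3]$. A deformation $[\cdot,\cdot,\cdot]_\lambda$ is trivial if there is a linear map $N':T\to T$ such that for all $\lambda$, $\varphi_\lambda=id+\lambda N'$ satisfies $\varphi_\lambda[x_1,x_2,x_3]_\lambda=[\varphi_\lambda x_1,\varphi_\lambda x_2,\varphi_\lambda x_3]$ for all $x_1,x_2,x_3\in T$. *)

From HB Require Import structures.
From mathcomp Require Import all_boot all_order all_algebra.
Set Implicit Arguments. Unset Strict Implicit. Unset Printing Implicit Defensive.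
Import Order.TTheory GRing.Theory Num.Theory.
Local Open Scope ring_scope.

(* A Z_2-graded vector space T = T_0 (+) T_1 over a field K is modelled as the
   product V0 * V1 of two K-vector spaces. Degrees are booleans (false = 0,
   true = 1), addition of degrees is xor (+). *)

Section SuperTriple.
Variables (K : fieldType) (V0 V1 : lmodType K).
Local Notation T := (V0 * V1)%type.

Definition homog (d : bool) (x : T) : Prop :=
  if d then x.1 = 0 else x.2 = 0.

Definition proj (d : bool) (x : T) : T :=
  if d then (0, x.2) else (x.1, 0).

Definition sgn (b : bool) : K := if b then -1 else 1.

Definition trilinear (br : T -> T -> T -> T) : Prop :=
  [/\ forall (a : K) x x' y z, br (a *: x + x') y z = a *: br x y z + br x' y z,
      forall (a : K) x y y' z, br x (a *: y + y') z = a *: br x y z + br x y' z &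
      forall (a : K) x y z z', br x y (a *: z + z') = a *: br x y z + br x y z'].

Definition JLSTS (delta : K) (br : T -> T -> T -> T) : Prop :=
  [/\ trilinear br,
      (forall a b c da db dc, homog da a -> homog db b -> homog dc c ->
         homog (da (+) db (+) dc) (br a b c)),
      (forall a b c da db, homog da a -> homog db b ->
         br b a c = (- delta * sgn (da && db)) *: br a b c),
      (forall a b c da db dc, homog da a -> homog db b -> homog dc c ->
         sgn (da && dc) *: br a b c + sgn (db && da) *: br b c a
         + sgn (dc && db) *: br c a b = 0) &
      (forall a b c d e da db dc dd, homog da a -> homog db b -> homog dc c ->
         homog dd d ->
         br a b (br c d e) = br (br a b c) d e
           + sgn (dc && (da (+) db)) *: br c (br a b d) e
           + (delta * sgn ((da (+) db) && (dc (+) dd))) *: br c d (br a b e))].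

(* theta(a,b)(x) = (-1)^{|x|(|a|+|b|)} [x,a,b], where dx, da, db are the degrees *)
Definition theta (br : T -> T -> T -> T) (dx da db : bool) (a b x : T) : T :=
  sgn (dx && (da (+) db)) *: br x a b.

Definition Dop (delta : K) (br : T -> T -> T -> T) (a b x : T) : T :=
  delta *: br a b x.

Definition even_op (N : T -> T) : Prop :=
  forall d x, homog d x -> homog d (N x).

Definition Nijenhuis (br : T -> T -> T -> T) (N : T -> T) : Prop :=
  forall x1 x2 x3,
    br (N x1) (N x2) (N x3) = 0 /\
    N (N (br x1 x2 x3)) =
      N (br (N x1) x2 x3) + N (br x1 (N x2) x3) + N (br x1 x2 (N x3))
      - br (N x1) (N x2) x3 - br x1 (N x2) (N x3) - br (N x1) x2 (N x3).

(* psi on homogeneous x1, x2, x3 of degrees d1, d2, d3 (N even, so |N xi| = di) *)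
Definition psi_h (delta : K) (br : T -> T -> T -> T) (N : T -> T)
    (d1 d2 d3 : bool) (x1 x2 x3 : T) : T :=
  sgn (d1 && (d2 (+) d3)) *: theta br d1 d2 d3 x2 x3 (N x1)
  - (delta * sgn (d2 && d3)) *: theta br d2 d1 d3 x1 x3 (N x2)
  + delta *: Dop delta br x1 x2 (N x3)
  - N (br x1 x2 x3).

(* psi extended trilinearly to all of T *)
Definition psi (delta : K) (br : T -> T -> T -> T) (N : T -> T) (x1 x2 x3 : T) : T :=
  \sum_(d1 : bool) \sum_(d2 : bool) \sum_(d3 : bool)
     psi_h delta br N d1 d2 d3 (proj d1 x1) (proj d2 x2) (proj d3 x3).

Definition def_br (delta : K) (br : T -> T -> T -> T) (N : T -> T) (lambda : K)
    (x1 x2 x3 : T) : T :=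
  br x1 x2 x3 + lambda *: psi delta br N x1 x2 x3.

Definition trivial_deformation (br : T -> T -> T -> T) (br_l : K -> T -> T -> T -> T)
    : Prop :=
  exists N' : {linear T -> T}, forall (lambda : K) x1 x2 x3,
    let phi := fun x => x + lambda *: N' x in
    phi (br_l lambda x1 x2 x3) = br (phi x1) (phi x2) (phi x3).

End SuperTriple.

(* On homogeneous arguments the sign factors of psi cancel (delta^2 = 1 and super
   skew-symmetry), so psi is the bracket [x,y,z]_N = [Nx,y,z] + [x,Ny,z] + [x,y,Nz] - N[x,y,z].
   Since N is even, [.,.,.]_N inherits trilinearity, grading, skew-symmetry and the cyclic
   identity. The defect of the fundamental identity for [.,.,.] + lambda [.,.,.]_N is
   quadratic in lambda: its lambda-coefficient is the sum of the defects of [.,.,.] with N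
   applied to one argument, minus N of the defect; by the Nijenhuis condition, in the form
   N[x,y,z]_N = [Nx,Ny,z] + [Nx,y,Nz] + [x,Ny,Nz], its lambda^2-coefficient is the sum of the
   defects with N applied to two arguments, minus N of the lambda-coefficient. So all of them
   vanish. The same form of the Nijenhuis condition, with [Nx,Ny,Nz] = 0, shows that
   id + lambda N maps [.,.,.]_lambda to [.,.,.]. *)

From HB Require Import structures.
From mathcomp Require Import all_boot all_order all_algebra.
From mathcomp Require Import ring.
Import GRing.Theory.

Set Implicit Arguments.
Unset Strict Implicit.
Unset Printing Implicit Defensive.

Local Open Scope ring_scope.

Inductive zexpr : Type :=
  | ZAtom of nat
  | ZZero
  | ZOpp of zexpr
  | ZAdd of zexpr & zexpr.

Section ZmodReflection.
Variables (V : zmodType) (env : seq V).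

Fixpoint zeval (e : zexpr) : V :=
  match e with
  | ZAtom i => nth 0 env i
  | ZZero => 0
  | ZOpp e1 => - zeval e1
  | ZAdd e1 e2 => zeval e1 + zeval e2
  end.

(* [(true, i)] stands for [- env_i] and [(false, i)] for [env_i]. *)
Fixpoint zatoms (e : zexpr) : seq (bool * nat) :=
  match e with
  | ZAtom i => [:: (false, i)]
  | ZZero => [::]
  | ZOpp e1 => [seq (~~ p.1, p.2) | p <- zatoms e1]
  | ZAdd e1 e2 => zatoms e1 ++ zatoms e2
  end.

Definition zatom_eval (p : bool * nat) : V :=
  if p.1 then - nth 0 env p.2 else nth 0 env p.2.

Lemma zevalE e : zeval e = \sum_(p <- zatoms e) zatom_eval p.
Proof.
elim: e => [i | | e IH | e1 IH1 e2 IH2] /=.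
- by rewrite big_seq1.
- by rewrite big_nil.
- by rewrite IH big_map -sumrN; apply: eq_bigr => -[[] i] _; rewrite /zatom_eval ?opprK.
- by rewrite big_cat IH1 IH2.
Qed.

Definition zcancels (e : zexpr) : bool :=
  perm_eq [seq p.2 | p <- zatoms e & p.1] [seq p.2 | p <- zatoms e & ~~ p.1].

Lemma zcancels_eval0 e : zcancels e -> zeval e = 0.
Proof.
move=> canc; rewrite zevalE (bigID (fun p => p.1)) /=.
have -> : \sum_(p <- zatoms e | p.1) zatom_eval p
          = - \sum_(i <- [seq p.2 | p <- zatoms e & p.1]) nth 0 env i.
  by rewrite big_map big_filter -sumrN; apply: eq_bigr => -[[] i].
have -> : \sum_(p <- zatoms e | ~~ p.1) zatom_eval p
          = \sum_(i <- [seq p.2 | p <- zatoms e & ~~ p.1]) nth 0 env i.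
  by rewrite big_map big_filter; apply: eq_bigr => -[[] i].
by rewrite (perm_big _ canc) addNr.
Qed.

End ZmodReflection.

Ltac zmod_index x l :=
  match l with
  | ?y :: _ => let _ := match goal with _ => unify x y end in constr:(0%N)
  | _ :: ?t => let n := zmod_index x t in constr:(n.+1)
  end.

Ltac zmod_atoms e l :=
  lazymatch e with
  | ?a + ?b => let l := zmod_atoms a l in zmod_atoms b l
  | - ?a => zmod_atoms a l
  | 0 => l
  | _ => match l with _ => let _ := zmod_index e l in l | _ => constr:(e :: l) end
  end.

Ltac zmod_reify e l :=
  lazymatch e with
  | ?a + ?b => let ra := zmod_reify a l in let rb := zmod_reify b l in constr:(ZAdd ra rb)
  | - ?a => let ra := zmod_reify a l in constr:(ZOpp ra)
  | 0 => constr:(ZZero)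
  | _ => let i := zmod_index e l in constr:(ZAtom i)
  end.

(* Proves [u = v] in a Z-module when the summands of [u - v] cancel in pairs
   [x], [- x]. Atoms are compared up to conversion ([unify]): after rewriting, equal
   terms often differ in the canonical-structure paths of their scalings. *)
Ltac zmod_cancel :=
  apply/subr0_eq;
  lazymatch goal with
  | |- ?e = 0 :> ?V =>
      let l := zmod_atoms e (@nil V) in
      let r := zmod_reify e l in
      change e with (zeval l r); apply: zcancels_eval0; vm_compute; reflexivity
  end.

Lemma scalerAC (R : comPzRingType) (V : lmodType R) (a b : R) (v : V) :
  a *: (b *: v) = b *: (a *: v).
Proof. by rewrite !scalerA mulrC. Qed.

Definition trilinear_map (R : comPzRingType) (V : lmodType R) (br : V -> V -> V -> V) :
    Prop :=
  [/\ forall (a : R) x x' y z, br (a *: x + x') y z = a *: br x y z + br x' y z,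
      forall (a : R) x y y' z, br x (a *: y + y') z = a *: br x y z + br x y' z &
      forall (a : R) x y z z', br x y (a *: z + z') = a *: br x y z + br x y z'].

Section TrilinearSlots.
Variables (R : comPzRingType) (V : lmodType R) (br : V -> V -> V -> V).
Hypothesis hbr : trilinear_map br.

Lemma trilin0_1 y z : br 0 y z = 0.
Proof. by case: hbr => h _ _; have := h (-1) 0 0 y z; rewrite !scaleN1r !addNr => ->. Qed.
Lemma trilin0_2 x z : br x 0 z = 0.
Proof. by case: hbr => _ h _; have := h (-1) x 0 0 z; rewrite !scaleN1r !addNr => ->. Qed.
Lemma trilin0_3 x y : br x y 0 = 0.
Proof. by case: hbr => _ _ h; have := h (-1) x y 0 0; rewrite !scaleN1r !addNr => ->. Qed.

Lemma trilinD1 x x' y z : br (x + x') y z = br x y z + br x' y z.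
Proof. by case: hbr => h _ _; have := h 1 x x' y z; rewrite !scale1r => ->. Qed.
Lemma trilinD2 x y y' z : br x (y + y') z = br x y z + br x y' z.
Proof. by case: hbr => _ h _; have := h 1 x y y' z; rewrite !scale1r => ->. Qed.
Lemma trilinD3 x y z z' : br x y (z + z') = br x y z + br x y z'.
Proof. by case: hbr => _ _ h; have := h 1 x y z z'; rewrite !scale1r => ->. Qed.

Lemma trilinZ1 a x y z : br (a *: x) y z = a *: br x y z.
Proof. by case: hbr => h _ _; have := h a x 0 y z; rewrite !addr0 trilin0_1 addr0 => ->. Qed.
Lemma trilinZ2 a x y z : br x (a *: y) z = a *: br x y z.
Proof. by case: hbr => _ h _; have := h a x y 0 z; rewrite !addr0 trilin0_2 addr0 => ->. Qed.
Lemma trilinZ3 a x y z : br x y (a *: z) = a *: br x y z.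
Proof. by case: hbr => _ _ h; have := h a x y z 0; rewrite !addr0 trilin0_3 addr0 => ->. Qed.

Lemma trilinN1 x y z : br (- x) y z = - br x y z.
Proof. by rewrite -scaleN1r trilinZ1 scaleN1r. Qed.
Lemma trilinN2 x y z : br x (- y) z = - br x y z.
Proof. by rewrite -scaleN1r trilinZ2 scaleN1r. Qed.
Lemma trilinN3 x y z : br x y (- z) = - br x y z.
Proof. by rewrite -scaleN1r trilinZ3 scaleN1r. Qed.

End TrilinearSlots.

Ltac expand hbr :=
  rewrite ?(trilinD1 hbr, trilinD2 hbr, trilinD3 hbr, trilinZ1 hbr, trilinZ2 hbr,
            trilinZ3 hbr, trilinN1 hbr, trilinN2 hbr, trilinN3 hbr,
            trilin0_1 hbr, trilin0_2 hbr, trilin0_3 hbr,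
            scaler0, addr0, add0r, oppr0, scalerDr, scalerN, opprD, opprK).

Ltac expand_lin hbr f :=
  repeat progress (rewrite ?(linearD f, linearZZ f, linearN f, linear0 f); expand hbr).

Section TrilinearMaps.
Variables (R : comPzRingType) (V : lmodType R).

Lemma trilinear_pencil (br br' : V -> V -> V -> V) (l : R) :
  trilinear_map br -> trilinear_map br' ->
  trilinear_map (fun x y z => br x y z + l *: br' x y z).
Proof.
move=> hb1 hb2.
by split=> a * /=; expand hb1; expand hb2; rewrite !(scalerAC l a); zmod_cancel.
Qed.

Definition fund_defect (s t : R) (br1 br2 : V -> V -> V -> V) (a b c d e : V) : V :=
  br1 a b (br2 c d e)
  - (br1 (br2 a b c) d e + s *: br1 c (br2 a b d) e + t *: br1 c d (br2 a b e)).

Lemma fund_defect_eq0 s t br1 br2 a b c d e :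
  fund_defect s t br1 br2 a b c d e = 0 <->
  br1 a b (br2 c d e)
  = br1 (br2 a b c) d e + s *: br1 c (br2 a b d) e + t *: br1 c d (br2 a b e).
Proof. by rewrite /fund_defect; split=> [/subr0_eq | ->]; last exact: subrr. Qed.

Lemma fund_defect_pencil (br br' : V -> V -> V -> V) :
  trilinear_map br -> trilinear_map br' -> forall (s t l : R) a b c d e,
  let brl x y z := br x y z + l *: br' x y z in
  fund_defect s t brl brl a b c d e
  = fund_defect s t br br a b c d e
    + l *: (fund_defect s t br br' a b c d e + fund_defect s t br' br a b c d e)
    + l *: (l *: fund_defect s t br' br' a b c d e).
Proof.
move=> hb1 hb2 s t l a b c d e /=; rewrite /fund_defect; expand hb1; expand hb2.
by rewrite !(scalerAC l s) !(scalerAC l t); zmod_cancel.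
Qed.

Definition cyclic_sum (p q r : R) (br : V -> V -> V -> V) (a b c : V) : V :=
  p *: br a b c + q *: br b c a + r *: br c a b.

Lemma cyclic_sum_pencil (br br' : V -> V -> V -> V) (p q r l : R) a b c :
  cyclic_sum p q r (fun x y z => br x y z + l *: br' x y z) a b c
  = cyclic_sum p q r br a b c + l *: cyclic_sum p q r br' a b c.
Proof. by rewrite /cyclic_sum !scalerDr !(scalerAC l); zmod_cancel. Qed.

Section NijenhuisBracket.
Variables (br : V -> V -> V -> V) (N : {linear V -> V}).
Hypothesis hbr : trilinear_map br.

Definition nij_br (x y z : V) : V :=
  br (N x) y z + br x (N y) z + br x y (N z) - N (br x y z).

Lemma trilinear_nij_br : trilinear_map nij_br.
Proof. by split=> a * /=; rewrite /nij_br; expand_lin hbr N; zmod_cancel. Qed.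

Definition N_insert1 (F : V -> V -> V -> V -> V -> V) (x1 x2 x3 x4 x5 : V) : V :=
  F (N x1) x2 x3 x4 x5 + F x1 (N x2) x3 x4 x5 + F x1 x2 (N x3) x4 x5
  + F x1 x2 x3 (N x4) x5 + F x1 x2 x3 x4 (N x5).

Definition N_insert2 (F : V -> V -> V -> V -> V -> V) (x1 x2 x3 x4 x5 : V) : V :=
  F (N x1) (N x2) x3 x4 x5 + F (N x1) x2 (N x3) x4 x5 + F (N x1) x2 x3 (N x4) x5
  + F (N x1) x2 x3 x4 (N x5) + F x1 (N x2) (N x3) x4 x5 + F x1 (N x2) x3 (N x4) x5
  + F x1 (N x2) x3 x4 (N x5) + F x1 x2 (N x3) (N x4) x5 + F x1 x2 (N x3) x4 (N x5)
  + F x1 x2 x3 (N x4) (N x5).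

Lemma fund_defect_nij_br_mixed s t a b c d e :
  fund_defect s t br nij_br a b c d e + fund_defect s t nij_br br a b c d e
  = N_insert1 (fund_defect s t br br) a b c d e - N (fund_defect s t br br a b c d e).
Proof. by rewrite /N_insert1 /fund_defect /nij_br; expand_lin hbr N; zmod_cancel. Qed.

Lemma cyclic_sum_nij_br p q r a b c :
  cyclic_sum p q r nij_br a b c
  = cyclic_sum p q r br (N a) b c + cyclic_sum p q r br a (N b) c
    + cyclic_sum p q r br a b (N c) - N (cyclic_sum p q r br a b c).
Proof. by rewrite /cyclic_sum /nij_br; expand_lin hbr N; zmod_cancel. Qed.

Section Nijenhuis.
Hypothesis hNN : forall x y z,
  N (N (br x y z)) = N (br (N x) y z) + N (br x (N y) z) + N (br x y (N z))
                     - br (N x) (N y) z - br x (N y) (N z) - br (N x) y (N z).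

Lemma N_nij_br x y z :
  N (nij_br x y z) = br (N x) (N y) z + br (N x) y (N z) + br x (N y) (N z).
Proof. by rewrite /nij_br; expand_lin hbr N; rewrite hNN; expand_lin hbr N; zmod_cancel. Qed.

Lemma nij_br_pencil_morph (l : R) x y z :
  (forall x y z, br (N x) (N y) (N z) = 0) ->
  let phi v := v + l *: N v in
  phi (br x y z + l *: nij_br x y z) = br (phi x) (phi y) (phi z).
Proof.
move=> hN3 /=; rewrite (linearD N) (linearZZ N) N_nij_br /nij_br.
by expand_lin hbr N; rewrite hN3; expand hbr; zmod_cancel.
Qed.

Ltac expand_nij_comp :=
  rewrite /N_insert2 /nij_br; expand_lin hbr N; rewrite !hNN; expand_lin hbr N; zmod_cancel.

Lemma nij_br_comp1 x1 x2 x3 x4 x5 :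
  nij_br (nij_br x1 x2 x3) x4 x5
  = N_insert2 (fun y1 y2 y3 y4 y5 => br (br y1 y2 y3) y4 y5) x1 x2 x3 x4 x5
    - N (nij_br (br x1 x2 x3) x4 x5 + br (nij_br x1 x2 x3) x4 x5).
Proof. by expand_nij_comp. Qed.

Lemma nij_br_comp2 x1 x2 x3 x4 x5 :
  nij_br x1 (nij_br x2 x3 x4) x5
  = N_insert2 (fun y1 y2 y3 y4 y5 => br y1 (br y2 y3 y4) y5) x1 x2 x3 x4 x5
    - N (nij_br x1 (br x2 x3 x4) x5 + br x1 (nij_br x2 x3 x4) x5).
Proof. by expand_nij_comp. Qed.

Lemma nij_br_comp3 x1 x2 x3 x4 x5 :
  nij_br x1 x2 (nij_br x3 x4 x5)
  = N_insert2 (fun y1 y2 y3 y4 y5 => br y1 y2 (br y3 y4 y5)) x1 x2 x3 x4 x5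
    - N (nij_br x1 x2 (br x3 x4 x5) + br x1 x2 (nij_br x3 x4 x5)).
Proof. by expand_nij_comp. Qed.

Lemma fund_defect_nij_br s t a b c d e :
  fund_defect s t nij_br nij_br a b c d e
  = N_insert2 (fund_defect s t br br) a b c d e
    - N (fund_defect s t br nij_br a b c d e + fund_defect s t nij_br br a b c d e).
Proof.
rewrite /fund_defect nij_br_comp1 nij_br_comp2 !nij_br_comp3 /N_insert2 /=.
rewrite ?(linearD N, linearN N, linearZZ N, scalerDr, scalerN, opprD, opprK).
by zmod_cancel.
Qed.

End Nijenhuis.

End NijenhuisBracket.

End TrilinearMaps.

Section GradedBrackets.
Variables (K : fieldType) (V0 V1 : lmodType K).
Local Notation T := (V0 * V1)%type.
Implicit Types (br : T -> T -> T -> T) (delta : K) (da db dc dd : bool).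

Lemma homogD d (x y : T) : homog d x -> homog d y -> homog d (x + y).
Proof. by case: d; rewrite /homog /= => -> ->; rewrite addr0. Qed.

Lemma homogZ d a (x : T) : homog d x -> homog d (a *: x).
Proof. by case: d; rewrite /homog /= => ->; rewrite scaler0. Qed.

Lemma homogN d (x : T) : homog d x -> homog d (- x).
Proof. by case: d; rewrite /homog /= => ->; rewrite oppr0. Qed.

Lemma homog_proj d (x : T) : homog d (proj d x).
Proof. by case: d. Qed.

Lemma proj_sum (x : T) : proj true x + proj false x = x.
Proof. by case: x => x0 x1; rewrite /proj /=; congr pair; rewrite ?add0r ?addr0. Qed.

Lemma scale_sgnK b (v : T) : sgn K b *: (sgn K b *: v) = v.
Proof. by rewrite scalerA; case: b; rewrite /sgn ?mulrNN mulr1 scale1r. Qed.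

Local Notation super_fund_defect delta da db dc dd :=
  (fund_defect (sgn K (dc && (da (+) db))) (delta * sgn K ((da (+) db) && (dc (+) dd)))).

Lemma JLSTS_fund_defect delta br a b c d e da db dc dd :
  JLSTS delta br -> homog da a -> homog db b -> homog dc c -> homog dd d ->
  super_fund_defect delta da db dc dd br br a b c d e = 0.
Proof. by case=> _ _ _ _ hfund ha hb hc hd; apply/fund_defect_eq0/hfund. Qed.

Lemma JLSTS_ext delta br br' :
  (forall x y z, br x y z = br' x y z) -> JLSTS delta br -> JLSTS delta br'.
Proof.
move=> E [[tl1 tl2 tl3] hgr hsk hcyc hfund]; split; first split.
- by move=> *; rewrite -!E; apply: tl1.
- by move=> *; rewrite -!E; apply: tl2.
- by move=> *; rewrite -!E; apply: tl3.
- by move=> *; rewrite -E; apply: hgr.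
- by move=> *; rewrite -!E; apply: hsk.
- by move=> *; rewrite -!E; apply: hcyc.
- by move=> *; rewrite -!E; apply: hfund.
Qed.

Lemma JLSTS_pencil delta br br' (l : K) :
  JLSTS delta br -> JLSTS delta br' ->
  (forall a b c d e da db dc dd,
     homog da a -> homog db b -> homog dc c -> homog dd d ->
     super_fund_defect delta da db dc dd br br' a b c d e
     + super_fund_defect delta da db dc dd br' br a b c d e = 0) ->
  JLSTS delta (fun x y z => br x y z + l *: br' x y z).
Proof.
move=> hT hT'; have [tl hgr hsk hcyc _] := hT; have [tl' hgr' hsk' hcyc' _] := hT'.
move=> hcompat; split.
- exact: trilinear_pencil.
- by move=> *; apply: homogD; [apply: hgr | apply/homogZ/hgr'].
- move=> a b c da db ha hb.
  by rewrite (hsk _ _ _ _ _ ha hb) (hsk' _ _ _ _ _ ha hb) scalerDr scalerAC.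
- move=> a b c da db dc ha hb hc.
  move: (cyclic_sum_pencil br br' (sgn K (da && dc)) (sgn K (db && da)) (sgn K (dc && db))
    l a b c).
  rewrite /cyclic_sum /= => ->.
  by rewrite (hcyc _ _ _ _ _ _ ha hb hc) (hcyc' _ _ _ _ _ _ ha hb hc) scaler0 addr0.
- move=> a b c d e da db dc dd ha hb hc hd.
  pose brl x y z := br x y z + l *: br' x y z.
  apply/(@fund_defect_eq0 _ _ _ _ brl brl).
  rewrite (fund_defect_pencil tl tl').
  have := hcompat _ _ _ _ _ _ _ _ _ ha hb hc hd.
  have := JLSTS_fund_defect e hT ha hb hc hd; have := JLSTS_fund_defect e hT' ha hb hc hd.
  by move=> -> -> ->; rewrite !scaler0 !addr0.
Qed.

Section NijenhuisOperator.
Variables (delta : K) (br : T -> T -> T -> T) (N : {linear T -> T}).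
Hypotheses (hT : JLSTS delta br) (hNeven : even_op N).

Let hbr : trilinear_map br. Proof. by case: hT. Qed.

Lemma homog_nij_br a b c da db dc :
  homog da a -> homog db b -> homog dc c -> homog (da (+) db (+) dc) (nij_br br N a b c).
Proof.
case: hT => _ hgr _ _ _ ha hb hc.
apply: homogD; first (apply: homogD; first apply: homogD).
- exact: hgr (hNeven ha) hb hc.
- exact: hgr ha (hNeven hb) hc.
- exact: hgr ha hb (hNeven hc).
- exact/homogN/hNeven/hgr.
Qed.

Lemma skew_nij_br a b c da db :
  homog da a -> homog db b ->
  nij_br br N b a c = (- delta * sgn K (da && db)) *: nij_br br N a b c.
Proof.
case: hT => _ _ hsk _ _ ha hb; rewrite /nij_br.
rewrite (hsk _ _ c _ _ ha (hNeven hb)) (hsk _ _ c _ _ (hNeven ha) hb).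
rewrite (hsk _ _ (N c) _ _ ha hb) (hsk _ _ c _ _ ha hb).
by expand_lin hbr N; zmod_cancel.
Qed.

Lemma cyclic_nij_br a b c da db dc :
  homog da a -> homog db b -> homog dc c ->
  sgn K (da && dc) *: nij_br br N a b c + sgn K (db && da) *: nij_br br N b c a
  + sgn K (dc && db) *: nij_br br N c a b = 0.
Proof.
case: hT => _ _ _ hcyc _ ha hb hc.
move: (cyclic_sum_nij_br br N (sgn K (da && dc)) (sgn K (db && da)) (sgn K (dc && db)) a b c).
rewrite /cyclic_sum => ->.
rewrite (hcyc _ _ _ _ _ _ (hNeven ha) hb hc) (hcyc _ _ _ _ _ _ ha (hNeven hb) hc).
rewrite (hcyc _ _ _ _ _ _ ha hb (hNeven hc)) (hcyc _ _ _ _ _ _ ha hb hc).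
by rewrite linear0 !addr0 subr0.
Qed.

Lemma N_insert1_eq0 (F : T -> T -> T -> T -> T -> T) a b c d e da db dc dd :
  (forall x1 x2 x3 x4 x5, homog da x1 -> homog db x2 -> homog dc x3 -> homog dd x4 ->
     F x1 x2 x3 x4 x5 = 0) ->
  homog da a -> homog db b -> homog dc c -> homog dd d -> N_insert1 N F a b c d e = 0.
Proof. by move=> hF ha hb hc hd; rewrite /N_insert1 !hF ?addr0 //; apply: hNeven. Qed.

Lemma N_insert2_eq0 (F : T -> T -> T -> T -> T -> T) a b c d e da db dc dd :
  (forall x1 x2 x3 x4 x5, homog da x1 -> homog db x2 -> homog dc x3 -> homog dd x4 ->
     F x1 x2 x3 x4 x5 = 0) ->
  homog da a -> homog db b -> homog dc c -> homog dd d -> N_insert2 N F a b c d e = 0.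
Proof. by move=> hF ha hb hc hd; rewrite /N_insert2 !hF ?addr0 //; apply: hNeven. Qed.

Lemma compatible_nij_br a b c d e da db dc dd :
  homog da a -> homog db b -> homog dc c -> homog dd d ->
  super_fund_defect delta da db dc dd br (nij_br br N) a b c d e
  + super_fund_defect delta da db dc dd (nij_br br N) br a b c d e = 0.
Proof.
move=> ha hb hc hd.
rewrite (fund_defect_nij_br_mixed N hbr) (JLSTS_fund_defect e hT ha hb hc hd) linear0 subr0.
by apply: N_insert1_eq0 ha hb hc hd => *; apply: JLSTS_fund_defect.
Qed.

Section PsiFormula.
Hypothesis hdelta : delta = 1 \/ delta = -1.

Lemma psi_h_nij_br d1 d2 d3 x y z :
  homog d1 x -> homog d2 y -> homog d3 z ->
  psi_h delta br N d1 d2 d3 x y z = nij_br br N x y z.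
Proof.
have sign_prod (v : T) : (delta * sgn K (d2 && d3)) *: (sgn K (d2 && (d1 (+) d3))
    *: ((- delta * sgn K (d1 && d2)) *: v)) = - v.
  rewrite !scalerA -scaleN1r; congr (_ *: _).
  by case: hdelta => ->; case: d1; case: d2; case: d3; rewrite /sgn /=; ring.
have delta_sq (v : T) : delta *: (delta *: v) = v.
  by rewrite scalerA; case: hdelta => ->; rewrite ?mulrNN mulr1 scale1r.
case: hT => _ _ hsk _ _ hx hy hz.
rewrite /psi_h /theta /Dop (hsk _ _ z _ _ hx (hNeven hy)).
by rewrite !scale_sgnK sign_prod delta_sq opprK.
Qed.

Lemma psi_nij_br x y z : psi delta br N x y z = nij_br br N x y z.
Proof.
have hnij := trilinear_nij_br N hbr.
rewrite /psi !big_bool /= !psi_h_nij_br; try exact: homog_proj.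
rewrite -!(trilinD3 hnij) !proj_sum -!(trilinD2 hnij) !proj_sum.
by rewrite -!(trilinD1 hnij) proj_sum.
Qed.

End PsiFormula.

Section Nijenhuis.
Hypothesis hN : Nijenhuis br N.

Let hNN x y z := proj2 (hN x y z).

Lemma fund_identity_nij_br a b c d e da db dc dd :
  homog da a -> homog db b -> homog dc c -> homog dd d ->
  super_fund_defect delta da db dc dd (nij_br br N) (nij_br br N) a b c d e = 0.
Proof.
move=> ha hb hc hd.
rewrite (fund_defect_nij_br hbr hNN) (compatible_nij_br e ha hb hc hd) linear0 subr0.
by apply: N_insert2_eq0 ha hb hc hd => *; apply: JLSTS_fund_defect.
Qed.

Lemma JLSTS_nij_br : JLSTS delta (nij_br br N).
Proof.
split.
- exact: trilinear_nij_br.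
- exact: homog_nij_br.
- exact: skew_nij_br.
- exact: cyclic_nij_br.
- by move=> a b c d e da db dc dd ha hb hc hd; apply/fund_defect_eq0/fund_identity_nij_br.
Qed.

End Nijenhuis.

End NijenhuisOperator.

End GradedBrackets.

Theorem theorem5p4 (K : fieldType) (V0 V1 : lmodType K)
    (br : (V0 * V1)%type -> (V0 * V1)%type -> (V0 * V1)%type -> (V0 * V1)%type)
    (delta : K) (hdelta : delta = 1 \/ delta = -1)
    (hT : JLSTS delta br)
    (N : {linear (V0 * V1)%type -> (V0 * V1)%type})
    (hNeven : even_op N) (hN : Nijenhuis br N) :
  (forall lambda : K, JLSTS delta (def_br delta br N lambda)) /\
  trivial_deformation br (def_br delta br N).
Proof.
have hbr : trilinear_map br by case: hT.
have psiE := psi_nij_br hT hNeven hdelta.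
split=> [l | ].
- apply: (@JLSTS_ext _ _ _ _ (fun x y z => br x y z + l *: nij_br br N x y z)).
    by move=> x y z; rewrite /def_br psiE.
  exact: JLSTS_pencil hT (JLSTS_nij_br hT hNeven hN) (compatible_nij_br hT hNeven).
- exists N => l x y z /=; rewrite /def_br psiE.
  exact: nij_br_pencil_morph hbr (fun x y z => proj2 (hN x y z)) l x y z
    (fun x y z => proj1 (hN x y z)).
Qed.
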